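(* Let $0\le s\le t$. The linear functional $X_s:W^{1,2}([0,t])\to\mathbb R$, $X_sh=\int_0^s h(u)\,\mathrm{d}Z_u$, is continuous (for every realization of $Z$), and $$\|X_s\|\le |Z_s|(1+s)+|Z_0|+\Big(\int_0^s Z_{u-}^2\,\mathrm{d}u\Big)^{1/2}<\infty.$$
   Context: $(Z_s)_{0\le s\le t}$ is a real-valued càdlàg semimartingale, $t>0$. For $h\in W^{1,2}([0,t])$ (weakly differentiable functions on $[0,t]$ with $h'\in L_2([0,t])$) the stochastic integral is defined pathwise by $\int_0^s h(u)\,\mathrm{d}Z_u:=h(s)Z_s-h(0)Z_0-\int_0^s Z_{u-}h'(u)\,\mathrm{d}u$. $W^{1,2}([0,t])$ carries the norm $\|h\|^2=|h(0)|^2+\int_0^t h'(u)^2\,\mathrm{d}u$ (a reproducing kernel Hilbert space norm with kernel $R(s,r)=1+\min(s,r)$), and $\|X_s\|$ denotes the corresponding dual norm. *)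

From HB Require Import structures.
From mathcomp Require Import all_boot all_order all_algebra.
From mathcomp Require Import all_classical all_reals all_analysis.
Set Implicit Arguments. Unset Strict Implicit. Unset Printing Implicit Defensive.
Import Order.TTheory GRing.Theory Num.Theory.
Import numFieldNormedType.Exports.
Local Open Scope classical_set_scope.
Local Open Scope ring_scope.

Section Defs.
Variable R : realType.
Local Notation leb := (@lebesgue_measure R).

(* A (deterministic) realization of a real-valued cadlag process on [0,t]:
   right-continuous on [0,t) and with left limits on (0,t]. *)
Definition cadlag_on (t : R) (Z : R -> R) : Prop :=
  (forall u, 0 <= u < t -> Z x @[x --> u^'+] --> Z u) /\
  (forall u, 0 < u <= t -> cvg (Z x @[x --> u^'-])).

(* Left limit Z_{u-}; by convention Z_{0-} := Z_0. *)
Definition left_lim (Z : R -> R) (u : R) : R :=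
  if 0 < u then lim (Z x @[x --> u^'-]) else Z 0.

(* (h, h') represents an element of W^{1,2}([0,t]): h' is measurable and
   square integrable on [0,t] and h is its primitive,
   h s = h 0 + \int_0^s h'(u) du (the absolutely continuous representative). *)
Definition W12 (t : R) (h h' : R -> R) : Prop :=
  measurable_fun `[0, t] h' /\
  (\int[leb]_(u in `[0%R, t]) ((h' u) ^+ 2)%:E < +oo)%E /\
  (forall s, 0 <= s <= t -> h s = h 0 + \int[leb]_(u in `[0, s]) h' u).

Definition W12_norm (t : R) (h h' : R -> R) : R :=
  Num.sqrt ((h 0) ^+ 2 + \int[leb]_(u in `[0, t]) (h' u) ^+ 2).

(* Pathwise stochastic integral
   \int_0^s h dZ := h(s) Z_s - h(0) Z_0 - \int_0^s Z_{u-} h'(u) du. *)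
Definition stoch_int (Z : R -> R) (s : R) (h h' : R -> R) : R :=
  h s * Z s - h 0 * Z 0 - \int[leb]_(u in `[0, s]) (left_lim Z u * h' u).

Definition W12_continuous (t : R) (X : (R -> R) -> (R -> R) -> R) : Prop :=
  forall h h', W12 t h h' -> forall e : R, 0 < e -> exists2 d : R, 0 < d &
    forall k k', W12 t k k' ->
      W12_norm t (k \- h) (k' \- h') < d -> `|X k k' - X h h'| < e.

Definition W12_dual_norm (t : R) (X : (R -> R) -> (R -> R) -> R) : \bar R :=
  ereal_sup [set r : \bar R | exists h h', [/\ W12 t h h',
     W12_norm t h h' <= 1 & r = (`|X h h'|)%:E]].

End Defs.

From HB Require Import structures.
From mathcomp Require Import all_boot all_order all_algebra.
From mathcomp Require Import all_classical all_reals all_analysis.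
From mathcomp Require Import measurable_realfun ring lra.
Import Order.TTheory GRing.Theory Num.Theory.
Import numFieldNormedType.Exports.
Local Open Scope classical_set_scope.
Local Open Scope ring_scope.

(* Integration by parts gives [X_s h = h(s) Z_s - h(0) Z_0 - \int_0^s Z_{u-} h'(u) du].
   Since [h(s) = h(0) + \int_0^s h'], Cauchy-Schwarz gives
   [|h(s)| <= sqrt(1 + s) ||h|| <= (1 + s) ||h||], and again
   [|\int_0^s Z_{u-} h'| <= ||Z_-||_{L^2(0,s)} ||h||]; this is the bound on [||X_s||].
   It is finite because a cadlag path is bounded on the compact [[0,t]] and
   [u |-> Z_{u-}] is measurable, being the pointwise limit of [Z] sampled on finer
   and finer grids approaching [u] from the left.  Finally [X_s] is linear, so the
   bound makes it Lipschitz, hence continuous. *)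

Lemma sqr_le_mul_of_quadratic_ge0 {R : realFieldType} (A B C : R) : 0 <= B ->
  (forall l, 0 <= A - 2 * l * C + l ^+ 2 * B) -> C ^+ 2 <= A * B.
Proof.
move=> B0 quad_ge0; have [B_gt0|B_le0] := ltP 0 B.
  have := quad_ge0 (C / B); set w := B^-1.
  have Bw : B * w = 1 by rewrite mulfV// gt_eqF.
  have w_gt0 : 0 < w by rewrite invr_gt0.
  move=> q_ge0; have : 0 <= B * (A - 2 * (C * w) * C + (C * w) ^+ 2 * B).
    by rewrite mulr_ge0 // ltW.
  nra.
have B_eq0 : B = 0 by apply/le_anti; rewrite B_le0 B0.
have [->|C_neq0] := eqVneq C 0; first by rewrite expr0n B_eq0 mulr0.
have := quad_ge0 ((A + 1) / (2 * C)); rewrite B_eq0 mulr0 addr0.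
have -> : 2 * ((A + 1) / (2 * C)) * C = A + 1 by field.
lra.
Qed.

Lemma add_mul_le_of_sqr {R : realFieldType} {a b c N : R} :
  0 <= a -> 0 <= b -> 0 <= c -> 0 <= N -> a ^+ 2 + b ^+ 2 <= N ^+ 2 ->
  a + c * b <= (1 + c ^+ 2) * N.
Proof.
move=> a0 b0 c0 N0 abN; have c2_ge0 : 0 <= 1 + c ^+ 2 by rewrite addr_ge0 ?sqr_ge0.
rewrite -(@ler_pXn2r _ 2) ?nnegrE ?addr_ge0 ?mulr_ge0 //.
have cauchy2 : (a + c * b) ^+ 2 <= (1 + c ^+ 2) * (a ^+ 2 + b ^+ 2).
  by rewrite -subr_ge0 [X in 0 <= X](_ : _ = (c * a - b) ^+ 2) ?sqr_ge0 //; ring.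
apply: (le_trans cauchy2); rewrite exprMn; apply: ler_pM; rewrite ?addr_ge0 ?sqr_ge0 //.
by rewrite expr2 ler_peMr ?lerDl ?sqr_ge0.
Qed.

Section square_integrable.
Context {d : measure_display} {T : measurableType d} {R : realType}.
Context {mu : {measure set T -> \bar R}} {D : set T}.
Hypothesis mD : measurable D.

Let integrableZlR (k : R) {h : T -> R} : mu.-integrable D (EFin \o h) ->
  mu.-integrable D (EFin \o (fun x => k * h x)).
Proof. exact: integrableZl. Qed.

Lemma integrableM_sq {f g : T -> R} : measurable_fun D f -> measurable_fun D g ->
  mu.-integrable D (EFin \o (fun x => f x ^+ 2)) ->
  mu.-integrable D (EFin \o (fun x => g x ^+ 2)) ->
  mu.-integrable D (EFin \o (fun x => f x * g x)).
Proof.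
move=> mf mg f2 g2; apply: (le_integrable mD _ _ (integrableD mD f2 g2)).
  by apply/measurable_EFinP; exact: measurable_funM.
move=> x _ /=; rewrite lee_fin [leRHS]ger0_norm ?addr_ge0 ?sqr_ge0 // ler_norml.
by apply/andP; split; nra.
Qed.

Lemma Rintegral_cauchy_schwarz {f g : T -> R} :
  measurable_fun D f -> measurable_fun D g ->
  mu.-integrable D (EFin \o (fun x => f x ^+ 2)) ->
  mu.-integrable D (EFin \o (fun x => g x ^+ 2)) ->
  `|\int[mu]_(x in D) (f x * g x)| <=
    Num.sqrt (\int[mu]_(x in D) (f x ^+ 2)) * Num.sqrt (\int[mu]_(x in D) (g x ^+ 2)).
Proof.
move=> mf mg f2 g2; have fg := integrableM_sq mf mg f2 g2.
set A := \int[mu]_(x in D) (f x ^+ 2); set B := \int[mu]_(x in D) (g x ^+ 2).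
set C := \int[mu]_(x in D) (f x * g x).
have A0 : 0 <= A by apply: Rintegral_ge0 => x _; exact: sqr_ge0.
have B0 : 0 <= B by apply: Rintegral_ge0 => x _; exact: sqr_ge0.
suff : C ^+ 2 <= A * B by rewrite -(@ler_sqrt _ _ _ (mulr_ge0 A0 B0)) sqrtr_sqr sqrtrM.
apply: sqr_le_mul_of_quadratic_ge0 => // l.
have -> : A - 2 * l * C + l ^+ 2 * B =
    \int[mu]_(x in D) (f x ^+ 2 + (- (2 * l)) * (f x * g x) + l ^+ 2 * g x ^+ 2).
  rewrite !RintegralD //; try exact: integrableZlR; last exact: (integrableD mD f2 (integrableZlR _ fg)).
  by rewrite !RintegralZl // -/A -/B -/C; ring.
apply: Rintegral_ge0 => x _; rewrite [leRHS](_ : _ = (f x - l * g x) ^+ 2) ?sqr_ge0 //.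
by ring.
Qed.

Lemma integrable_sqP {f : T -> R} : measurable_fun D f ->
  mu.-integrable D (EFin \o (fun x => f x ^+ 2)) <->
  (\int[mu]_(x in D) (f x ^+ 2)%:E < +oo)%E.
Proof.
move=> mf; have normE : (\int[mu]_(x in D) `|(f x ^+ 2)%:E| = \int[mu]_(x in D) (f x ^+ 2)%:E)%E.
  by apply: eq_integral => x _; rewrite gee0_abs // lee_fin sqr_ge0.
split=> [/integrableP[_]|f2_fin]; first by rewrite normE.
apply/integrableP; split; last by rewrite normE.
by apply/measurable_EFinP; exact: measurable_funX.
Qed.

Lemma integrableB_sq {f g : T -> R} : measurable_fun D f -> measurable_fun D g ->
  mu.-integrable D (EFin \o (fun x => f x ^+ 2)) ->
  mu.-integrable D (EFin \o (fun x => g x ^+ 2)) ->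
  mu.-integrable D (EFin \o (fun x => (f x - g x) ^+ 2)).
Proof.
move=> mf mg f2 g2.
apply: (le_integrable mD _ _ (integrableZlR 2 (integrableD mD f2 g2))).
  by apply/measurable_EFinP; apply: measurable_funX; exact: measurable_funB.
move=> x _ /=; rewrite lee_fin (ger0_norm (sqr_ge0 _)) ger0_norm; last first.
  by rewrite mulr_ge0 // addr_ge0 // sqr_ge0.
by rewrite -subr_ge0 [X in 0 <= X](_ : _ = (f x + g x) ^+ 2) ?sqr_ge0 //; ring.
Qed.

Hypothesis muD_fin : (mu D < +oo)%E.

Lemma integrable_cst_fin (k : R) : mu.-integrable D (EFin \o (fun _ => k)).
Proof. exact: measurable_bounded_integrable (measurable_cst _) (bounded_cst _ _). Qed.

Lemma integrable_of_sq {f : T -> R} : measurable_fun D f ->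
  mu.-integrable D (EFin \o (fun x => f x ^+ 2)) -> mu.-integrable D (EFin \o f).
Proof.
move=> mf f2; have one2 := integrable_cst_fin (1 ^+ 2).
have := integrableM_sq (f := fun=> 1) (measurable_cst _) mf one2 f2.
apply: eq_integrable => //.
by move=> x _ /=; rewrite mul1r.
Qed.

End square_integrable.

(* A point of the grid of mesh [1/(m+1)] strictly left of [u > 0], clipped at [0];
   it only depends on [truncn ((m+1) u)], so [Z \o left_grid m] is a step function. *)
Definition left_grid {R : realType} (m : nat) (u : R) : R :=
  Num.max 0 (((Num.truncn (m.+1%:R * u))%:R - 1) / m.+1%:R).

Lemma left_grid_itv {R : realType} (m : nat) {u : R} : 0 < u ->
  left_grid m u < u /\ u - 2 / m.+1%:R <= left_grid m u.
Proof.
move=> u0; rewrite /left_grid; set n : R := m.+1%:R.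
have n0 : 0 < n by rewrite ltr0n.
have /andP[trunc_le trunc_gt] : (Num.truncn (n * u))%:R <= n * u < (Num.truncn (n * u)).+1%:R.
  by apply: truncn_itv; rewrite mulr_ge0// ltW.
rewrite -natr1 in trunc_gt; set k : R := (Num.truncn (n * u))%:R in trunc_le trunc_gt *.
clearbody k n.
have gapE : (k - 1) / n = u - (n * u - k + 1) / n by field; rewrite gt_eqF.
have gap_gt0 : 0 < (n * u - k + 1) / n by rewrite divr_gt0 //; lra.
have gap_le : (n * u - k + 1) / n <= 2 / n by rewrite ler_pM2r ?invr_gt0 //; lra.
rewrite gt_max le_max u0 gapE /=; split; [lra|apply/orP; right; lra].
Qed.

Lemma cvg_left_grid {R : realType} (u : R) : 0 < u -> left_grid ^~ u @ \oo --> u.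
Proof.
move=> u0; apply/cvgrPdist_le => e e0; near=> m.
have [gu ug] := left_grid_itv m u0.
have : m.+1%:R^-1 < (PosNum (divr_gt0 e0 (ltr0n R 2)))%:num.
  by near: m; exact: near_infty_natSinv_lt.
rewrite /= ger0_norm; set a := m.+1%:R^-1 in ug *; lra.
Unshelve. all: by end_near.
Qed.

Lemma left_grid0 {R : realType} (m : nat) : left_grid m (0 : R) = 0.
Proof. by rewrite /left_grid mulr0 truncn0 sub0r max_l. Qed.

Lemma measurable_truncn_ge {R : realType} (c : R) (m : nat) :
  measurable [set u : R | (m <= Num.truncn (c * u))%N].
Proof.
case: m => [|m]; first by rewrite [X in measurable X](_ : _ = setT) //; apply/seteqP.
rewrite [X in measurable X](_ : _ = (fun u => c * u) @^-1` [set x | m.+1%:R <= x]).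
  apply: closed_measurable; apply: closed_comp; last exact: closed_ge.
  by move=> x _; apply: continuousM => //; exact: cvg_cst.
by apply/seteqP; split => u /=; rewrite -truncn_gt_nat.
Qed.

Lemma measurable_fun_truncn {R : realType} (D : set R) (F : nat -> R) (c : R) :
  measurable_fun D (fun u => F (Num.truncn (c * u))).
Proof.
move=> mD B mB; apply: measurableI => //.
rewrite [X in measurable X](_ : _ = \bigcup_(m in [set m | B (F m)])
    ([set u | (m <= Num.truncn (c * u))%N] `\` [set u | (m.+1 <= Num.truncn (c * u))%N])).
  by apply: bigcup_measurable => m _; apply: measurableD; exact: measurable_truncn_ge.
apply/seteqP; split => u /=.
  by move=> Bu; exists (Num.truncn (c * u)) => //=; rewrite leqnn ltnn.
move=> [m /= Bm [mu um]].
suff -> : Num.truncn (c * u) = m by [].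
by apply/eqP; rewrite eqn_leq mu andbT leqNgt; exact/negP.
Qed.

Lemma near_norm_le_of_cvg {R : realType} {F : set_system R} {FF : Filter F}
    {f : R -> R} {l : R} :
  f @ F --> l -> \forall y \near F, `|f y| <= `|l| + 1.
Proof.
move/cvgrPdist_lt => /(_ 1 ltr01); apply: filterS => y hy.
rewrite -[f y](subrKC l) (le_trans (ler_normD _ _))// lerD2l.
by rewrite distrC ltW.
Qed.

Section cadlag.
Context {R : realType} {t : R} {Z : R -> R}.
Hypothesis cZ : cadlag_on t Z.

Lemma cadlag_locally_bounded {x : R} : 0 <= x <= t ->
  exists B : R, \forall y \near x, 0 <= y <= t -> `|Z y| <= B.
Proof.
case: cZ => rc ll /andP[x0 xt].
have [BL HL] : exists BL : R, \forall y \near x, y < x -> 0 <= y -> `|Z y| <= BL.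
  have [x_gt0|x_le0] := ltP 0 x; last by exists 0; near=> y => yx y0; lra.
  have /cvg_ex[l /near_norm_le_of_cvg HL] := ll x (introT andP (conj x_gt0 xt)).
  exists (`|l| + 1).
  have HL' : \forall y \near x^'-, 0 <= y -> `|Z y| <= `|l| + 1.
    by apply: filterS HL.
  exact: HL'.
have [BR HR] : exists BR : R, \forall y \near x, x < y -> y <= t -> `|Z y| <= BR.
  have [x_lt_t|t_le_x] := ltP x t; last by exists 0; near=> y => xy yt; lra.
  exists (`|Z x| + 1).
  have HR : \forall y \near x^'+, y <= t -> `|Z y| <= `|Z x| + 1.
    by apply: filterS (near_norm_le_of_cvg (rc x (introT andP (conj x0 x_lt_t)))).
  exact: HR.
exists (Num.max BL (Num.max BR `|Z x|)); near=> y => /andP[y0 yt].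
rewrite !le_max; have [yx|xy|->] := ltgtP y x.
- by rewrite (near HL y).
- by rewrite (near HR y) ?orbT.
- by rewrite lexx !orbT.
Unshelve. all: by end_near.
Qed.

Lemma cadlag_bounded : exists M : R, forall u, 0 <= u <= t -> `|Z u| <= M.
Proof.
have := @segment_compact R 0 t => /compact_near_coveringP/near_covering_withinP.
move=> /(_ R (pinfty_nbhs R) (fun M x => `|Z x| <= M)) cover.
have /filter_ex[M hM] : \forall M \near +oo, `[0, t] `<=` [set x | `|Z x| <= M].
  apply: cover => x; rewrite /= in_itv/= => xt.
  have [B HB] := cadlag_locally_bounded xt.
  near=> y M => /=; rewrite in_itv/= => yt.
  have ZyB : `|Z y| <= B by move: yt; near: y; exact: HB.
  apply: (le_trans ZyB).
  by near: M; apply: nbhs_pinfty_ge; exact: num_real.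
by exists M => u ut; apply: hM; rewrite /= in_itv.
Unshelve. all: by end_near.
Qed.

Lemma cvg_left_lim {u : R} : 0 < u <= t -> Z x @[x --> u^'-] --> left_lim Z u.
Proof.
by case: cZ => _ ll ut; have /andP[u0 _] := ut; rewrite /left_lim u0; exact: ll.
Qed.

Lemma left_lim_bounded (M : R) : (forall u, 0 <= u <= t -> `|Z u| <= M) ->
  forall u, 0 <= u <= t -> `|left_lim Z u| <= M.
Proof.
move=> ZM u /andP[u0 ut]; have [u_gt0|u_le0] := ltP 0 u; last first.
  by rewrite /left_lim ltNge u_le0 /=; apply: ZM; rewrite lexx (le_trans u0 ut).
have Zu := cvg_left_lim (introT andP (conj u_gt0 ut)).
apply: (cvgr_to_le (cvg_norm Zu)).
near=> x; apply: ZM; apply/andP; split; first by near: x; exact: nbhs_left_ge.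
by apply: (le_trans _ ut); apply: ltW; near: x; exact: nbhs_left_lt.
Unshelve. all: by end_near.
Qed.

Lemma measurable_left_lim : measurable_fun `[0, t] (left_lim Z).
Proof.
have grid_meas m : measurable_fun `[0, t] (fun u => Z (left_grid m u)).
  exact: (measurable_fun_truncn _ (fun k => Z (Num.max 0 ((k%:R - 1) / m.+1%:R)))).
have grid_cvg u : [set` `[0, t]] u -> (fun m => Z (left_grid m u)) @ \oo --> left_lim Z u.
  rewrite /= in_itv/= => /andP[u0 ut]; have [u_gt0|u_le0] := ltP 0 u; last first.
    have -> : u = 0 by apply/le_anti; rewrite u0 u_le0.
    by rewrite /left_lim ltxx; apply: cvg_near_cst; apply: nearW => m; rewrite left_grid0.
  move/cvg_at_leftP: (cvg_left_lim (introT andP (conj u_gt0 ut))); apply.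
  by split; [move=> m; case: (left_grid_itv m u_gt0) | exact: cvg_left_grid].
exact: measurable_fun_cvg grid_meas grid_cvg.
Qed.

End cadlag.

Section W12_theory.
Context {R : realType}.
Local Notation leb := (@lebesgue_measure R).
Local Notation RR := (measurableTypeR R).

Lemma lebesgue_measure_itv0 {s : R} : 0 <= s -> leb `[0, s] = s%:E.
Proof.
move=> s0; rewrite lebesgue_measure_itv /= lte_fin.
case: ltP => [_|s_le0]; first by rewrite oppr0 adde0.
by have -> : s = 0 by apply/le_anti; rewrite s0 s_le0.
Qed.

Lemma itv0_subset {s t : R} : s <= t -> [set` `[0, s]] `<=` [set` `[0, t]].
Proof. by move=> st; apply: subset_itvl; rewrite bnd_simp. Qed.

Context {t : R}.

Lemma W12_continuous_of_lipschitz {X : (R -> R) -> (R -> R) -> R} {K : R} : 0 <= K ->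
  (forall h h' k k', W12 t h h' -> W12 t k k' ->
    `|X k k' - X h h'| <= K * W12_norm t (k \- h) (k' \- h')) ->
  W12_continuous t X.
Proof.
move=> K0 X_lip h h' Wh e e0; have K1_gt0 : 0 < K + 1 by rewrite ltr_wpDl.
exists (e / (K + 1)); first by rewrite divr_gt0.
move=> k k' Wk kh_lt; apply: (le_lt_trans (X_lip _ _ _ _ Wh Wk)).
apply: (le_lt_trans (ler_wpM2l K0 (ltW kh_lt))).
by rewrite mulrA ltr_pdivrMr // mulrC ltr_pM2l // ltrDl.
Qed.

Lemma W12_sq_integrable {h h' : R -> R} : W12 t h h' ->
  leb.-integrable `[0, t] (EFin \o (fun x => h' x ^+ 2)).
Proof. by case=> mh' [h2_fin _]; exact: (integrable_sqP (mu := leb) mh').2. Qed.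

Section restriction.
Context {s : R} {h h' : R -> R}.
Hypotheses (st : 0 <= s <= t) (Wh : W12 t h h').

Lemma W12_measurable_restrict : measurable_fun (`[0, s] : set RR) h'.
Proof.
case: Wh => mh' _; case/andP: st => _ s_le_t.
(* [W12] states measurability for the canonical measurable structure of [R];
   the Lebesgue measure lives on the convertible type [measurableTypeR R]. *)
have mh'_RR : measurable_fun (`[0, t] : set RR) h' := mh'.
exact: (measurable_funS (measurable_itv _) (itv0_subset s_le_t) mh'_RR).
Qed.

Lemma W12_sq_integrable_restrict :
  leb.-integrable `[0, s] (EFin \o (fun x => h' x ^+ 2)).
Proof.
case/andP: st => _ s_le_t.
by apply: integrableS (W12_sq_integrable Wh) => //; exact: itv0_subset.
Qed.

Lemma W12_integrable_restrict : leb.-integrable `[0, s] (EFin \o h').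
Proof.
case/andP: st => s0 _; apply: integrable_of_sq => //.
- by have := lebesgue_measure_itv0 s0; rewrite /= => ->; rewrite ltry.
- exact: W12_measurable_restrict.
- exact: W12_sq_integrable_restrict.
Qed.

End restriction.

Lemma W12B {h h' k k' : R -> R} : W12 t h h' -> W12 t k k' -> W12 t (k \- h) (k' \- h').
Proof.
move=> Wh Wk; case: (Wh) => mh' [_ hE]; case: (Wk) => mk' [_ kE].
have mkh' := measurable_funB mk' mh'.
split=> //; split.
  apply: (integrable_sqP (mu := leb) mkh').1.
  have mDt : measurable (`[0, t] : set RR) by exact: measurable_itv.
  have mk'_RR : measurable_fun (`[0, t] : set RR) k' := mk'.
  have mh'_RR : measurable_fun (`[0, t] : set RR) h' := mh'.
  have kh2 := integrableB_sq mDt mk'_RR mh'_RR (W12_sq_integrable Wk)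
    (W12_sq_integrable Wh).
  exact: kh2.
move=> s st; rewrite /= hE // kE // RintegralB //; last 2 first.
- exact: W12_integrable_restrict Wk.
- exact: W12_integrable_restrict Wh.
by rewrite opprD addrACA.
Qed.

Section norm_bounds.
Context {s : R} {h h' : R -> R}.
Hypotheses (st : 0 <= s <= t) (Wh : W12 t h h').

Let mDs : measurable (`[0, s] : set RR). Proof. exact: measurable_itv. Qed.

Let int_sq_ge0 : 0 <= \int[leb]_(u in `[0, s]) (h' u ^+ 2).
Proof. by apply: Rintegral_ge0 => u _; exact: sqr_ge0. Qed.

Lemma sqr_W12_norm_ge :
  `|h 0| ^+ 2 + \int[leb]_(u in `[0, s]) (h' u ^+ 2) <= W12_norm t h h' ^+ 2.
Proof.
have [s0 s_le_t] := andP st.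
have sq_t := W12_sq_integrable Wh; have sq_s := W12_sq_integrable_restrict st Wh.
have int_le : \int[leb]_(u in `[0, s]) (h' u ^+ 2) <= \int[leb]_(u in `[0, t]) (h' u ^+ 2).
  rewrite /Rintegral fine_le //; [exact: integrable_fin_num|exact: integrable_fin_num|].
  have mDt : measurable (`[0, t] : set RR) by exact: measurable_itv.
  apply: (ge0_subset_integral _ mDs mDt); first by case/integrableP: sq_t.
  - by move=> u _; rewrite lee_fin sqr_ge0.
  - exact: itv0_subset.
rewrite /W12_norm sqr_sqrtr ?addr_ge0 ?sqr_ge0 ?(le_trans int_sq_ge0) //.
by rewrite real_normK ?num_real // lerD2l.
Qed.

Lemma normr_W12_at0_le : `|h 0| <= W12_norm t h h'.
Proof.
rewrite -(@ler_pXn2r _ 2) ?nnegrE ?sqrtr_ge0 //.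
by apply: le_trans sqr_W12_norm_ge; rewrite lerDl.
Qed.

Lemma sqrt_int_sq_le_W12_norm :
  Num.sqrt (\int[leb]_(u in `[0, s]) (h' u ^+ 2)) <= W12_norm t h h'.
Proof.
rewrite -(@ler_pXn2r _ 2) ?nnegrE ?sqrtr_ge0 // sqr_sqrtr //.
by apply: le_trans sqr_W12_norm_ge; rewrite lerDr sqr_ge0.
Qed.

Lemma normr_W12_le : `|h s| <= (1 + s) * W12_norm t h h'.
Proof.
have [s0 s_le_t] := andP st; case: (Wh) => _ [_ hE].
have muDs_fin : (leb `[0%R, s] < +oo)%E.
  by have := lebesgue_measure_itv0 s0; rewrite /= => ->; rewrite ltry.
have one2 := integrable_cst_fin mDs muDs_fin (1 ^+ 2).
have := Rintegral_cauchy_schwarz (f := fun=> 1) mDs (measurable_cst _)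
  (W12_measurable_restrict st Wh) one2 (W12_sq_integrable_restrict st Wh).
under eq_Rintegral do rewrite mul1r.
rewrite expr1n Rintegral_cst // mul1r.
have -> : fine (leb `[0%R, s]) = s by have := lebesgue_measure_itv0 s0; rewrite /= => ->.
move=> cauchy_schwarz; rewrite hE //; apply: (le_trans (ler_normD _ _)).
have ab_le : `|h 0| ^+ 2 + Num.sqrt (\int[leb]_(u in `[0, s]) (h' u ^+ 2)) ^+ 2 <=
    W12_norm t h h' ^+ 2 by rewrite sqr_sqrtr //; exact: sqr_W12_norm_ge.
have := add_mul_le_of_sqr (normr_ge0 _) (sqrtr_ge0 _) (sqrtr_ge0 s) (sqrtr_ge0 _) ab_le.
by rewrite sqr_sqrtr //; apply: le_trans; rewrite lerD2l.
Qed.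

End norm_bounds.

End W12_theory.

Section stoch_int.
Context {R : realType}.
Local Notation leb := (@lebesgue_measure R).
Local Notation RR := (measurableTypeR R).
Context {t s : R} {Z : R -> R}.
Hypotheses (st : 0 <= s <= t) (cZ : cadlag_on t Z).

Let mDs : measurable (`[0, s] : set RR). Proof. exact: measurable_itv. Qed.

Lemma measurable_left_lim_restrict : measurable_fun (`[0, s] : set RR) (left_lim Z).
Proof.
have [_ s_le_t] := andP st.
have mZ : measurable_fun (`[0, t] : set RR) (left_lim Z) := measurable_left_lim cZ.
exact: (measurable_funS (measurable_itv _) (itv0_subset s_le_t) mZ).
Qed.

Lemma left_lim_sq_integrable :
  leb.-integrable `[0, s] (EFin \o (fun u => left_lim Z u ^+ 2)).
Proof.
have [s0 s_le_t] := andP st; have [M /(left_lim_bounded cZ) ZM] := cadlag_bounded cZ.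
apply: measurable_bounded_integrable mDs _ _ _.
- by have := lebesgue_measure_itv0 s0; rewrite /= => ->; rewrite ltry.
- exact: measurable_funX measurable_left_lim_restrict.
exists (M ^+ 2); split; first exact: num_real.
move=> N MN u; rewrite /= in_itv /= => /andP[u0 us]; apply: le_trans (ltW MN).
have ZuM : `|left_lim Z u| <= M by apply: ZM; rewrite u0 (le_trans us s_le_t).
by rewrite normrX expr2 ler_pM.
Qed.

Lemma stoch_intB {h h' k k' : R -> R} : W12 t h h' -> W12 t k k' ->
  stoch_int Z s k k' - stoch_int Z s h h' = stoch_int Z s (k \- h) (k' \- h').
Proof.
move=> Wh Wk; have lZ2 := left_lim_sq_integrable.
have lZk := integrableM_sq mDs measurable_left_lim_restrict
  (W12_measurable_restrict st Wk) lZ2 (W12_sq_integrable_restrict st Wk).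
have lZh := integrableM_sq mDs measurable_left_lim_restrict
  (W12_measurable_restrict st Wh) lZ2 (W12_sq_integrable_restrict st Wh).
rewrite /stoch_int /= (_ : \int[leb]_(u in `[0, s]) (left_lim Z u * (k' u - h' u)) =
    \int[leb]_(u in `[0, s]) (left_lim Z u * k' u) -
    \int[leb]_(u in `[0, s]) (left_lim Z u * h' u)); first ring.
by rewrite -RintegralB //; apply: eq_Rintegral => u _; rewrite mulrBr.
Qed.

Lemma stoch_int_le {h h' : R -> R} : W12 t h h' ->
  `|stoch_int Z s h h'| <=
    (`|Z s| * (1 + s) + `|Z 0| +
     Num.sqrt (\int[leb]_(u in `[0, s]) (left_lim Z u) ^+ 2)) * W12_norm t h h'.
Proof.
move=> Wh; have [s0 _] := andP st.
have := Rintegral_cauchy_schwarz mDs measurable_left_lim_restrict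
  (W12_measurable_restrict st Wh) left_lim_sq_integrable (W12_sq_integrable_restrict st Wh).
have := ler_wpM2l (sqrtr_ge0 (\int[leb]_(u in `[0, s]) (left_lim Z u) ^+ 2))
  (sqrt_int_sq_le_W12_norm st Wh).
have := ler_wpM2r (normr_ge0 (Z s)) (normr_W12_le st Wh).
have := ler_wpM2r (normr_ge0 (Z 0)) (normr_W12_at0_le st Wh).
rewrite /stoch_int; set I := \int[leb]_(u in `[0, s]) (left_lim Z u * h' u).
set A := \int[leb]_(u in `[0, s]) (left_lim Z u ^+ 2).
set B := \int[leb]_(u in `[0, s]) (h' u ^+ 2).
have triangle : `|h s * Z s - h 0 * Z 0 - I| <= `|h s| * `|Z s| + `|h 0| * `|Z 0| + `|I|.
  by rewrite -!normrM; apply: (le_trans (ler_normB _ _)); rewrite lerD2r ler_normB.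
by move: triangle; lra.
Qed.

End stoch_int.

Theorem lemmaA1 (R : realType) (t s : R) (Z : R -> R) :
  0 < t -> 0 <= s <= t -> cadlag_on t Z ->
  [/\ W12_continuous t (stoch_int Z s),
      (\int[@lebesgue_measure R]_(u in `[0%R, s]) ((left_lim Z u) ^+ 2)%:E < +oo)%E &
      (W12_dual_norm t (stoch_int Z s) <=
        (`|Z s| * (1 + s) + `|Z 0| +
         Num.sqrt (\int[@lebesgue_measure R]_(u in `[0, s]) (left_lim Z u) ^+ 2))%:E)%E].
Proof.
move=> _ st cZ; set K := _ + Num.sqrt _.
have [s0 _] := andP st.
have K0 : 0 <= K by rewrite addr_ge0 ?sqrtr_ge0 // addr_ge0 // mulr_ge0 // addr_ge0.
split.
- apply: (W12_continuous_of_lipschitz K0) => h h' k k' Wh Wk.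
  have lip := stoch_int_le st cZ (W12B Wh Wk).
  by rewrite (stoch_intB st cZ Wh Wk); exact: lip.
- exact: (integrable_sqP (mu := @lebesgue_measure R) (measurable_left_lim_restrict st cZ)).1
    (left_lim_sq_integrable st cZ).
- rewrite /W12_dual_norm; apply: ge_ereal_sup => _ [h [h' [Wh h_le1 ->]]]; rewrite lee_fin.
  apply: (le_trans (stoch_int_le st cZ Wh)).
  by rewrite -[leRHS]mulr1 ler_wpM2l.
Qed.
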